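(* In the setting described in the context, for every $(u_1,\dots,u_n)\in\widetilde C(U,W,\alpha)$ we have $u_i(p_j)=j$ for all $1\le j<i\le n$. In particular $\mathrm{fix}_{(\alpha_i,n]}(u_i,u_{i+1})\cap[a,i]\subseteq[a,0]$ for every $i\in[n-1]$, and hence $\widetilde{\mathrm{wt}}^n_\alpha(u_1,\dots,u_n)(y_1,\dots,y_{n-1};\mathbf y)$ is a product of pairwise distinct factors $(y_i-y_j)$ with $i\in[n-1]$ and $j\in[a,0]$.
   Context: Permutations: for integers $a\le n$, $S_{[a,n]}$ is the set of bijections of $\mathbb Z$ fixing every integer outside $[a,n]$, one-line notation $[w(a),\dots,w(n)]$; $\tau_{i,j}$ swaps $i<j$, $u\tau_{i,j}=u\circ\tau_{i,j}$; $\ell(u)$ = number of inversions; $u\lessdot_k u\tau_{i,j}$ if $i\le k<j$ and $\ell(u\tau_{i,j})=\ell(u)+1$; $u\xrightarrow{k}w$ if there is a chain $u=v_1\lessdot_k\cdots\lessdot_k v_s=w$ ($s\ge1$), $v_{t+1}=v_t\tau_{i_t,j_t}$, with $v_1(i_1)<\cdots<v_{s-1}(i_{s-1})$. $\mathrm{fix}_I(u,v)=\{u(t):t\in I,\ u(t)=v(t)\}$. For $\beta=(\beta_1,\dots,\beta_m)$, $C(u,w,\beta)$ is the set of $(v_1,\dots,v_{m+1})$ with $v_1=u$, $v_{m+1}=w$, $v_i\xrightarrow{\beta_i}v_{i+1}$. Setting: fix $a\le0<n$ and $A=\{(r,c):1\le r\le n,\ a\le c\le r\}$. Let $\gamma=(\gamma_N,\gamma_E,\gamma_S,\gamma_W)$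 be a boundary condition of $A$: $\gamma_N(c)$ ($c\in[a,n]$) is the label of the pipe entering through the top edge of the top cell $(\max(c,1),c)$ of column $c$ or $\varnothing$; $\gamma_E(r)$ that of the pipe entering through the right edge of $(r,r)$ or $\varnothing$; $\gamma_S(c)$ that of the pipe exiting through the bottom edge of $(n,c)$ or $\varnothing$; $\gamma_W(r)$ that of the pipe exiting through the left edge of $(r,a)$ or $\varnothing$. Assume $\gamma_S(c)\neq\varnothing$ for $c\in[a,n]$, $\gamma_W(r)=\varnothing$ and $\gamma_N(r)\ne\varnothing$ for $r\in[n]$, and the non-$\varnothing$ values of $\gamma_N,\gamma_E$ are exactly $a,\dots,n$, increasing along the order: top edges of columns $a,\dots,1$, right edge of row 1, top edge of column 2, right edge of row 2, …, top edge of column $n$, right edge of row $n$ (the values of $\gamma_S$ are then also exactly $a,\dots,n$). Put $p_c=\gamma_N(c)$ ($c\in[n]$), $\alpha_i=p_{i+1}-1$, $\alpha=(\alpha_1,\dots,\alpha_{n-1})$. $P_r=\{w\in S_{[a,n]}:w(p_j)=j\ \forall j\in(r,n]\}$; $\iota_r:P_r\to S_{[a,r]}$ deletes the values $r+1,\dots,n$ from one-line notation. $W\in P_1$: $\iota_1(W)(\ell)=\gamma_N^{-1}(\ell)$ for $\ell\in[a,p_1]$ and $\iota_1(W)$ decreasing on $(p_1,1]$. $U\in S_{[a,n]}$: $U(\ell)=\gamma_S^{-1}(\ell)$ for $\ell\in[a,n]$. $\widetilde C(U,W,\alpha)$ is the set of $(u_1,\dots,u_n)\in C(U,W,\alpha)$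 with $i\notin\mathrm{fix}_{(\alpha_i,n]}(u_i,u_{i+1})$ for all $i\in[n-1]$, and $\widetilde{\mathrm{wt}}^n_\alpha(u_1,\dots,u_n)(x_1,\dots,x_{n-1};\mathbf y)=\prod_{i\in[n-1]}\prod_{j\in\mathrm{fix}_{(\alpha_i,n]}(u_i,u_{i+1})\cap[a,i]}(x_i-y_j)$. *)

From mathcomp Require Import all_boot all_order all_algebra.
Set Implicit Arguments. Unset Strict Implicit. Unset Printing Implicit Defensive.
Import Order.TTheory GRing.Theory Num.Theory.
Local Open Scope ring_scope.

Definition irange (lo hi : int) : seq int :=
  if lo <= hi then [seq lo + (k%:Z) | k <- iota 0 (absz (hi - lo)).+1] else [::].

Definition inZ (lo hi t : int) : bool := (lo <= t) && (t <= hi).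

Definition supported_in (u : int -> int) (lo hi : int) : Prop :=
  forall t, ~~ inZ lo hi t -> u t = t.

Definition in_S (a n : int) (u : int -> int) : Prop :=
  bijective u /\ supported_in u a n.

Definition tau (i j t : int) : int := if t == i then j else if t == j then i else t.
Definition rmul_tau (u : int -> int) (i j : int) : int -> int := fun t => u (tau i j t).

Definition inv_on (lo hi : int) (u : int -> int) : nat :=
  count (fun st : int * int => (st.1 < st.2) && (u st.2 < u st.1))
        [seq (s, t) | s <- irange lo hi, t <- irange lo hi].

(* l(u) = l : the number of inversions of the finitely supported permutation u
   is l (counted on any window containing the support of u) *)
Definition length_is (u : int -> int) (l : nat) : Prop :=
  exists lo hi, supported_in u lo hi /\ inv_on lo hi u = l.

Definition kcover_via (k : int) (u v : int -> int) (i j : int) : Prop :=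
  [/\ i <= k, k < j, v = rmul_tau u i j &
      exists l : nat, length_is u l /\ length_is v l.+1].

Definition karrow (k : int) (u w : int -> int) : Prop :=
  exists (s : nat) (vs : nat -> int -> int) (iss jss : nat -> int),
    [/\ (0 < s)%N, vs 0%N = u, vs s.-1 = w,
        (forall t : nat, (t.+1 < s)%N -> kcover_via k (vs t) (vs t.+1) (iss t) (jss t)) &
        (forall t : nat, (t.+2 < s)%N -> vs t (iss t) < vs t.+1 (iss t.+1))].

Definition fixb (lo hi : int) (u v : int -> int) (x : int) : bool :=
  has (fun t => (u t == v t) && (u t == x)) (irange (lo + 1) hi).

(* The order of the north/east boundary edges: top edges of columns a..0,
   then (top edge of column r, right edge of row r) for r = 1..n. *)
Definition bnd_order (gN gE : int -> option int) (a n : int) : seq (option int) :=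
  map gN (irange a 0) ++ flatten [seq [:: gN r; gE r] | r <- irange 1 n].

Definition boundary_ok (a n : int) (gN gE gS gW : int -> option int) : Prop :=
  [/\ (forall c, inZ a n c -> gS c != None),
      (forall r, inZ 1 n r -> gW r = None),
      (forall r, inZ 1 n r -> gN r != None),
      pmap id (bnd_order gN gE a n) = irange a n &
      perm_eq (pmap gS (irange a n)) (irange a n)].

Definition pcol (gN : int -> option int) (c : int) : int := odflt 0 (gN c).
Definition alpha (gN : int -> option int) (i : int) : int := pcol gN (i + 1) - 1.

(* iota_r : delete the values r+1..n from the one-line notation [W(a),...,W(n)] *)
Definition iota_del (a n r : int) (W : int -> int) (l : int) : int :=
  if inZ a r l then nth 0 [seq x <- map W (irange a n) | x <= r] (absz (l - a)) else l.

Definition W_ok (a n : int) (gN : int -> option int) (W : int -> int) : Prop :=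
  [/\ in_S a n W,
      (forall j, inZ 2 n j -> W (pcol gN j) = j),
      (forall l, inZ a (pcol gN 1) l -> gN (iota_del a n 1 W l) = Some l) &
      (forall s t, pcol gN 1 < s -> s < t -> t <= 1 ->
                   iota_del a n 1 W t < iota_del a n 1 W s)].

Definition U_ok (a n : int) (gS : int -> option int) (U : int -> int) : Prop :=
  in_S a n U /\ (forall l, inZ a n l -> gS (U l) = Some l).

(* (u_1,...,u_n) in Ctilde(U, W, alpha), the tuple given as i |-> uu i *)
Definition Ctilde (a n : int) (gN : int -> option int) (U W : int -> int)
    (uu : int -> int -> int) : Prop :=
  [/\ uu 1 = U, uu n = W &
      forall i, inZ 1 (n - 1) i ->
        karrow (alpha gN i) (uu i) (uu (i + 1)) /\
        ~~ fixb (alpha gN i) n (uu i) (uu (i + 1)) i].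

(* wt~^n_alpha(u_1..u_n)(x;y), evaluated at arbitrary values in a comm. ring *)
Definition wt (R : comNzRingType) (a n : int) (gN : int -> option int)
    (uu : int -> int -> int) (x y : int -> R) : R :=
  \prod_(i <- irange 1 (n - 1))
     \prod_(j <- irange a i | fixb (alpha gN i) n (uu i) (uu (i + 1)) j) (x i - y j).

(* Along a k-chain u -k-> w, entries at positions <= k only grow, entries at
   positions > k only shrink, and an entry that changes at a position > k ends
   below some entry at a position <= k: a k-cover u < u tau_{i,j} has
   u(i) < u(j), for otherwise swapping back would increase the length again.
   The positions p_1 < ... < p_n increase and W(p_j) = j. Since u_{i+1}, ...,
   u_n = W only grow at positions <= alpha_i = p_{i+1} - 1, every entry of
   u_{i+1} there is at most i. Induct on i: for j < i, u_{i+1}(p_j) is squeezed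
   between u_i(p_j) = j and W(p_j) = j. The value i of u_{i+1} cannot lie right
   of alpha_i: beyond n it would exceed W there, if it moved it would lie below
   an entry <= i, and if it did not move it would be a forbidden fixed point.
   So it lies where W has the value i, namely at p_i. Finally, a fixed value
   j in [1, i] would sit at p_j <= alpha_i, outside (alpha_i, n]. *)

From mathcomp Require Import all_boot all_order all_algebra zify.
Set Implicit Arguments. Unset Strict Implicit. Unset Printing Implicit Defensive.
Import Order.TTheory GRing.Theory Num.Theory.
Local Open Scope ring_scope.

Lemma irangeE (lo hi : int) : lo <= hi + 1 ->
  irange lo hi = [seq lo + k%:Z | k <- iota 0 (absz (hi - lo + 1))].
Proof.
rewrite /irange; case: ifP => [h1 _|h1 h2]; first by congr map; congr iota; lia.
by have -> : absz (hi - lo + 1) = 0%N by lia.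
Qed.

Lemma mem_irange (lo hi x : int) : (x \in irange lo hi) = (lo <= x <= hi).
Proof.
rewrite /irange; case: ifP => h; last by rewrite in_nil; lia.
apply/mapP/idP => [[k]|hx]; first by rewrite mem_iota => /andP[_ hk] ->; lia.
by exists (absz (x - lo)); [rewrite mem_iota|]; lia.
Qed.

Lemma uniq_irange (lo hi : int) : uniq (irange lo hi).
Proof.
rewrite /irange; case: ifP => // _; rewrite map_inj_uniq ?iota_uniq //.
by move=> k1 k2 /addrI [].
Qed.

Lemma sorted_irange (lo hi : int) : sorted <%R (irange lo hi).
Proof.
rewrite /irange; case: ifP => // _.
by apply: (homo_sorted (e := ltn)) (iota_ltn_sorted _ _) => x y /=; lia.
Qed.

Lemma size_irange (lo hi : int) : lo <= hi + 1 ->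
  size (irange lo hi) = absz (hi - lo + 1).
Proof. by move=> h; rewrite irangeE // size_map size_iota. Qed.

Lemma nth_irange (lo hi : int) k : (k < size (irange lo hi))%N ->
  nth 0 (irange lo hi) k = lo + k%:Z.
Proof.
rewrite /irange; case: ifP => // _; rewrite size_map size_iota => hk.
by rewrite (nth_map 0%N) ?size_iota // nth_iota.
Qed.

Lemma irange_split (lo c hi : int) : lo <= c <= hi + 1 ->
  irange lo hi = irange lo (c - 1) ++ irange c hi.
Proof.
move=> hc; rewrite !irangeE; try lia.
have -> : absz (hi - lo + 1) = addn (absz (c - 1 - lo + 1)) (absz (hi - c + 1)) by lia.
rewrite iotaD map_cat add0n; congr (_ ++ _).
rewrite -[in LHS](addn0 (absz _)) iotaDl -map_comp.
by apply: eq_map => k /=; lia.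
Qed.

Lemma irange_cons (lo hi : int) : lo <= hi -> irange lo hi = lo :: irange (lo + 1) hi.
Proof.
move=> h; rewrite (@irange_split lo (lo + 1)); last by lia.
by rewrite addrK {1}/irange lexx subrr /= addr0.
Qed.

Lemma irange_mid (lo c hi : int) : lo <= c <= hi ->
  irange lo hi = irange lo (c - 1) ++ c :: irange (c + 1) hi.
Proof. by move=> h; rewrite (@irange_split lo c) ?(@irange_cons c) //; lia. Qed.

Lemma sorted_cat_cons_rel (T : eqType) (r : rel T) (s1 s2 : seq T) x y :
  transitive r -> sorted r (s1 ++ y :: s2) -> x \in s1 -> r x y.
Proof.
move=> r_tr; elim: s1 => // z s1 IH /= hp; rewrite in_cons => /orP[/eqP ->|hx].
  move: hp; rewrite path_sortedE //.
  by case/andP => /allP -> //; rewrite mem_cat mem_head orbT.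
exact: IH (path_sorted hp) hx.
Qed.

Lemma ge_int_ind (lo : int) (P : int -> Prop) :
  P lo -> (forall i, lo <= i -> P i -> P (i + 1)) -> forall i, lo <= i -> P i.
Proof.
move=> P0 PS i hi; have [d ->] : exists d : nat, i = lo + d%:Z.
  by exists (absz (i - lo)); lia.
elim: d {hi} => [|d IH]; first by rewrite addr0.
by rewrite -addn1 PoszD addrA; apply: PS => //; lia.
Qed.

Lemma homo_ler_int_steps (g : int -> int) (i m : int) : i <= m ->
  (forall l, i <= l -> l < m -> g l <= g (l + 1)) -> g i <= g m.
Proof.
move: m; apply: ge_int_ind => // m hm IH hs.
apply: le_trans (IH _) (hs _ hm _) => [l hl hlm|]; last by lia.
by apply: hs; lia.
Qed.

Definition inv_pair (w : int -> int) (x y : int) : bool := (x < y) && (w y < w x).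

Definition inversions (I : seq int) (w : int -> int) : nat :=
  (\sum_(x <- I) \sum_(y <- I) inv_pair w x y)%N.

Lemma inv_onE lo hi w : inv_on lo hi w = inversions (irange lo hi) w.
Proof.
rewrite /inv_on /inversions -sum1_count big_mkcond big_allpairs.
by apply: eq_bigr => x _; apply: eq_bigr => y _; rewrite /inv_pair; case: ifP.
Qed.

Lemma eq_inversions I u v : {in I, u =1 v} -> inversions I u = inversions I v.
Proof.
move=> h; apply: eq_big_seq => x hx; apply: eq_big_seq => y hy.
by rewrite /inv_pair !h.
Qed.

Lemma big_uniq_subset (R : Type) (idx : R) (op : Monoid.com_law idx)
    (T : eqType) (I J : seq T) (h : T -> R) : uniq I -> uniq J -> {subset I <= J} ->
  (forall x, x \in J -> x \notin I -> h x = idx) ->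
  \big[op/idx]_(x <- J) h x = \big[op/idx]_(x <- I) h x.
Proof.
move=> uI uJ sIJ h0; rewrite (bigID (mem I)) /=.
rewrite [X in op _ X]big1_seq ?Monoid.mulm1 //; last by move=> x /andP[hn /h0 ->].
rewrite -big_filter; apply/perm_big/uniq_perm; rewrite ?filter_uniq //.
by move=> x; rewrite mem_filter; case: (boolP (x \in I)) => //= /sIJ.
Qed.

Lemma supported_in_mem u lo hi x : injective u -> supported_in u lo hi ->
  inZ lo hi x -> inZ lo hi (u x).
Proof.
move=> iu su hx; apply/negPn/negP => hn.
by have e := iu _ _ (su _ hn); move: hn; rewrite e hx.
Qed.

Lemma inv_pair_supported u lo hi x y : injective u -> supported_in u lo hi ->
  inv_pair u x y -> inZ lo hi x && inZ lo hi y.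
Proof.
move=> iu su /andP[hxy hu]; have hm := supported_in_mem iu su.
case hx: (inZ lo hi x); case hy: (inZ lo hi y) => //=.
- have e := su y (negbT hy); have := hm _ hx.
  by move: hx hy hxy hu; rewrite /inZ e; lia.
- have e := su x (negbT hx); have := hm _ hy.
  by move: hx hy hxy hu; rewrite /inZ e; lia.
- have ex := su x (negbT hx); have ey := su y (negbT hy).
  by move: hxy hu; rewrite ex ey; lia.
Qed.

Lemma inversions_window u lo hi lo' hi' : injective u -> supported_in u lo hi ->
  lo' <= lo -> hi <= hi' -> inversions (irange lo' hi') u = inversions (irange lo hi) u.
Proof.
move=> iu su h1 h2; have out := inv_pair_supported iu su.
have sub : {subset irange lo hi <= irange lo' hi'}.
  by move=> x; rewrite !mem_irange; lia.
rewrite /inversions (big_uniq_subset _ _ _ sub) ?uniq_irange //; last first.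
  move=> x _; rewrite mem_irange => hx; apply: big1_seq => y _.
  by case: (boolP (inv_pair u x y)) => // /out; rewrite /inZ; case/andP; lia.
apply: eq_big_seq => x _; apply: big_uniq_subset; rewrite ?uniq_irange //.
move=> y _; rewrite mem_irange => hy.
by case: (boolP (inv_pair u x y)) => // /out; rewrite /inZ; case/andP; lia.
Qed.

Lemma bigD2_seq (T : eqType) (I : seq T) (a b : T) :
  uniq I -> a \in I -> b \in I -> a != b -> forall h : T -> nat,
  (\sum_(x <- I) h x = h a + h b + \sum_(x <- I | (x != a) && (x != b)) h x)%N.
Proof.
move=> uI aI bI ab h; rewrite (bigD1_seq a) //= -big_filter (bigD1_seq b) //=.
  by rewrite big_filter_cond addnA.
by rewrite mem_filter bI eq_sym ab.
by rewrite filter_uniq.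
Qed.

Lemma big2D2_seq (T : eqType) (I : seq T) (a b : T) (G : T -> T -> nat) :
  uniq I -> a \in I -> b \in I -> a != b ->
  (\sum_(x <- I) \sum_(y <- I) G x y =
   G a a + G a b + G b a + G b b
   + \sum_(c <- I | (c != a) && (c != b)) (G a c + G b c + G c a + G c b)
   + \sum_(x <- I | (x != a) && (x != b)) \sum_(y <- I | (y != a) && (y != b)) G x y)%N.
Proof.
move=> uI aI bI ab; have split := bigD2_seq uI aI bI ab.
rewrite (split (fun x => \sum_(y <- I) G x y)%N) (split (G a)) (split (G b)).
rewrite [X in (_ + X = _)%N](eq_bigr (fun x => G x a + G x b +
  \sum_(y <- I | (y != a) && (y != b)) G x y)%N); last by move=> x _; rewrite split.
rewrite !big_split /=; lia.
Qed.

Lemma tau_l i j : tau i j i = j. Proof. by rewrite /tau eqxx. Qed.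
Lemma tau_r i j : i != j -> tau i j j = i.
Proof. by move=> h; rewrite /tau eq_sym (negbTE h) eqxx. Qed.
Lemma tau_id i j t : t != i -> t != j -> tau i j t = t.
Proof. by move=> h1 h2; rewrite /tau (negbTE h1) (negbTE h2). Qed.

Lemma tauK i j : involutive (tau i j).
Proof.
move=> x; rewrite /tau; case: (eqVneq x i) => [->|hi]; first by rewrite eqxx; case: eqVneq.
by case: (eqVneq x j) => [->|hj]; rewrite ?eqxx // (negbTE hi) (negbTE hj).
Qed.

Lemma inv_pair_swap_le (w : int -> int) a b c : a < b -> w a < w b -> c != a -> c != b ->
  (inv_pair w a c + inv_pair w b c + inv_pair w c a + inv_pair w c b <=
   inv_pair (rmul_tau w a b) a c + inv_pair (rmul_tau w a b) b c +
   inv_pair (rmul_tau w a b) c a + inv_pair (rmul_tau w a b) c b)%N.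
Proof.
move=> ab wab ca cb; have nab : a != b by rewrite lt_eqF.
rewrite /inv_pair /rmul_tau tau_l tau_r // tau_id //.
case: (boolP (a < c)) => ?; case: (boolP (b < c)) => ?; case: (boolP (c < a)) => ?;
case: (boolP (c < b)) => ? //=; try lia;
case: (boolP (w c < w a)) => ?; case: (boolP (w c < w b)) => ?;
case: (boolP (w a < w c)) => ?; case: (boolP (w b < w c)) => ? //=; lia.
Qed.

Lemma inversions_swap_lt I w a b : uniq I -> a \in I -> b \in I -> a < b -> w a < w b ->
  (inversions I w < inversions I (rmul_tau w a b))%N.
Proof.
move=> uI aI bI ab wab; have nab : a != b by rewrite lt_eqF.
rewrite /inversions !(big2D2_seq _ uI aI bI nab).
have corner v : (inv_pair v a a + inv_pair v a b + inv_pair v b a + inv_pair v b b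
    = nat_of_bool (v b < v a)%R)%N.
  by rewrite /inv_pair !ltxx ab (lt_gtF ab) /= add0n !addn0.
rewrite !corner -!addSn; apply: leq_add; first apply: leq_add.
- by rewrite /rmul_tau tau_l tau_r // (lt_gtF wab) wab.
- by apply: leq_sum => c /andP[ca cb]; apply: inv_pair_swap_le.
- apply/eq_leq/eq_bigr => x /andP[xa xb]; apply: eq_bigr => y /andP[ya yb].
  by rewrite /inv_pair /rmul_tau !tau_id.
Qed.

Lemma rmul_tau_inj u i j : injective u -> injective (rmul_tau u i j).
Proof. by move=> iu x y /iu; exact: (can_inj (tauK i j)). Qed.

Lemma rmul_tau_bij u i j : bijective u -> bijective (rmul_tau u i j).
Proof. by move=> bu; apply: bij_comp => //; apply: inv_bij (tauK i j). Qed.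

Lemma length_is_inversions u l : injective u -> length_is u l ->
  exists lo hi, forall lo' hi', lo' <= lo -> hi <= hi' ->
    inversions (irange lo' hi') u = l.
Proof.
move=> iu [lo [hi [su <-]]]; exists lo, hi => lo' hi' h1 h2.
by rewrite inv_onE (inversions_window iu su).
Qed.

Lemma kcover_via_lt k u v i j : injective u -> kcover_via k u v i j -> u i < u j.
Proof.
move=> iu [ik kj -> [l [lu lv]]]; have ij : i < j by apply: le_lt_trans kj.
have [lo1 [hi1 Eu]] := length_is_inversions iu lu.
have [lo2 [hi2 Ev]] := length_is_inversions (@rmul_tau_inj u i j iu) lv.
pose lo := - (`|lo1| + `|lo2| + `|i|); pose hi := `|hi1| + `|hi2| + `|j|.
have [iI jI] : i \in irange lo hi /\ j \in irange lo hi by rewrite !mem_irange; lia.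
case: ltgtP => // [ji|/iu/eqP]; last by rewrite lt_eqF.
(* Otherwise swapping back would give l(u) > l(u tau) = l(u) + 1. *)
have := inversions_swap_lt (w := rmul_tau u i j) (uniq_irange lo hi) iI jI ij.
have -> : inversions (irange lo hi) (rmul_tau (rmul_tau u i j) i j) =
          inversions (irange lo hi) u.
  by apply: eq_inversions => t _; rewrite /rmul_tau tauK.
rewrite /rmul_tau tau_l tau_r ?lt_eqF // => /(_ ji).
by rewrite Eu ?Ev; lia.
Qed.

(* The third clause holds for a k-cover because the value moved to j > k is
   smaller than the one moved to i <= k, and entries left of k only grow. *)
Definition kmove (k : int) (u w : int -> int) : Prop :=
  [/\ forall x, x <= k -> u x <= w x,
      forall x, k < x -> w x <= u x &
      forall x, k < x -> w x != u x -> exists2 y, y <= k & w x < w y].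

Lemma kmove_refl k u : kmove k u u.
Proof. by split=> // x _; rewrite eqxx. Qed.

Lemma kmove_trans k u v w : kmove k u v -> kmove k v w -> kmove k u w.
Proof.
move=> [uvL uvR uvN] [vwL vwR vwN]; split.
- by move=> x hx; apply: le_trans (uvL _ hx) (vwL _ hx).
- by move=> x hx; apply: le_trans (vwR _ hx) (uvR _ hx).
- move=> x hx hne; case: (eqVneq (w x) (v x)) => [e|]; last exact: vwN.
  have [y hy lt] : exists2 y, y <= k & v x < v y by apply: uvN => //; rewrite -e.
  by exists y => //; rewrite e; apply: lt_le_trans lt (vwL _ hy).
Qed.

Lemma kcover_via_kmove k u v i j : injective u -> kcover_via k u v i j -> kmove k u v.
Proof.
move=> iu cov; have lt := kcover_via_lt iu cov.
case: cov => ik kj -> _; have ij : i != j by rewrite lt_eqF // (le_lt_trans ik).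
split=> x hx; rewrite /rmul_tau.
- case: (eqVneq x i) => [->|xi]; first by rewrite tau_l ltW.
  by rewrite tau_id // (lt_eqF (le_lt_trans hx kj)).
- case: (eqVneq x j) => [->|xj]; first by rewrite tau_r // ltW.
  by rewrite tau_id // (gt_eqF (le_lt_trans ik hx)).
- case: (eqVneq x j) => [->|xj]; first by exists i; rewrite ?tau_r ?tau_l.
  by rewrite tau_id ?eqxx // (gt_eqF (le_lt_trans ik hx)).
Qed.

Lemma karrow_kmove k u w : bijective u -> karrow k u w -> bijective w /\ kmove k u w.
Proof.
move=> bu [s [vs [iss [jss [s_gt0 e0 <- cov _]]]]]; subst u.
suff : forall t, (t < s)%N -> bijective (vs t) /\ kmove k (vs 0%N) (vs t).
  by apply; rewrite prednK.
elim=> [_|t IH ts]; first by split=> //; apply: kmove_refl.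
have [bt mt] := IH (ltnW ts); have cv := cov t ts.
split; first by case: cv => _ _ -> _; apply: rmul_tau_bij.
exact: kmove_trans mt (kcover_via_kmove (bij_inj bt) cv).
Qed.

Section BoundaryOrder.
Variables (gN gE : int -> option int) (a n : int).
Hypotheses (a_le0 : a <= 0) (n_gt0 : 0 < n)
  (bnd : pmap id (bnd_order gN gE a n) = irange a n).

Definition bnd_cell (r : int) : seq (option int) :=
  if r <= 0 then [:: gN r] else [:: gN r; gE r].

Lemma bnd_orderE : bnd_order gN gE a n = flatten [seq bnd_cell r | r <- irange a n].
Proof.
rewrite /bnd_order (@irange_split a 1 n); last by lia.
rewrite map_cat flatten_cat; congr (_ ++ _).
  have : all (fun r => r <= 0) (irange a (1 - 1)).
    by apply/allP => x; rewrite mem_irange; lia.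
  by elim: (irange a _) => //= r s IH /andP[hr /IH ->]; rewrite /bnd_cell hr.
congr flatten; apply/eq_in_map => r; rewrite mem_irange /bnd_cell => h.
by rewrite lt_geF //; lia.
Qed.

Lemma gN_in_bnd_cells c m x : a <= c <= m -> gN c = Some x ->
  x \in pmap id (flatten [seq bnd_cell r | r <- irange a m]).
Proof.
move=> hc ex; rewrite mem_pmap map_id; apply/flatten_mapP; exists c.
  by rewrite mem_irange.
by rewrite /bnd_cell; case: ifP; rewrite ex mem_head.
Qed.

Lemma gN_lt c c' x y : a <= c -> c < c' -> c' <= n ->
  gN c = Some x -> gN c' = Some y -> x < y.
Proof.
move=> h1 h2 h3 ex ey.
have := sorted_irange a n; rewrite -bnd bnd_orderE (@irange_mid a c' n); last by lia.
rewrite map_cat flatten_cat pmap_cat.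
have -> : pmap id (flatten [seq bnd_cell r | r <- c' :: irange (c' + 1) n]) =
    y :: pmap id (behead (bnd_cell c') ++ flatten [seq bnd_cell r | r <- irange (c' + 1) n]).
  by rewrite /= /bnd_cell; case: ifP; rewrite ey.
move=> /(sorted_cat_cons_rel lt_trans); apply; apply: (gN_in_bnd_cells _ ex); lia.
Qed.

Lemma gN_mem c x : a <= c <= n -> gN c = Some x -> a <= x <= n.
Proof. by move=> hc ex; rewrite -mem_irange -bnd bnd_orderE (gN_in_bnd_cells hc ex). Qed.

Lemma gN_inj c c' x : a <= c <= n -> a <= c' <= n ->
  gN c = Some x -> gN c' = Some x -> c = c'.
Proof.
move=> hc hc' ex ex'; case: (ltgtP c c') => // h.
- by have := gN_lt _ h _ ex ex'; rewrite ltxx; lia.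
- by have := gN_lt _ h _ ex' ex; rewrite ltxx; lia.
Qed.

Lemma gN1_le1 x : gN 1 = Some x -> x <= 1.
Proof.
move=> ex; move: bnd; rewrite /bnd_order (@irange_cons 1 n); last by lia.
rewrite /= ex /= pmap_cat /= => e.
set K := size (pmap id (map gN (irange a 0))).
have hK : (K <= absz (0 - a + 1)%R)%N.
  rewrite /K size_pmap -size_irange; last by lia.
  by rewrite -(size_map gN) count_size.
have hsz : (K < size (irange a n))%N by rewrite -e size_cat /= -/K; lia.
by have := nth_irange hsz; rewrite -e nth_cat ltnn subnn /= => ->; lia.
Qed.

End BoundaryOrder.

Section Chain.
Variables (a n : int) (gN gE gS gW : int -> option int) (U W : int -> int)
  (uu : int -> int -> int).
Hypotheses (a_le0 : a <= 0) (n_gt0 : 0 < n) (bnd : boundary_ok a n gN gE gS gW)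
  (HU : U_ok a n gS U) (HW : W_ok a n gN W) (HC : Ctilde a n gN U W uu).

Local Notation p := (pcol gN).

Let bnd_seq : pmap id (bnd_order gN gE a n) = irange a n.
Proof. by case: bnd. Qed.

Lemma gN_pcol j : 1 <= j <= n -> gN j = Some (p j).
Proof. by move=> hj; case: bnd => _ _ /(_ j hj); rewrite /pcol; case: (gN j). Qed.

Lemma pcol_lt j j' : 1 <= j -> j < j' -> j' <= n -> p j < p j'.
Proof.
move=> h1 h2 h3; apply: (gN_lt a_le0 n_gt0 bnd_seq _ h2 h3); try apply: gN_pcol; lia.
Qed.

Lemma pcol_le j j' : 1 <= j -> j <= j' -> j' <= n -> p j <= p j'.
Proof.
move=> h1 h2 h3; have [-> //|/eqP ne] := eqVneq j j'.
by apply/ltW/pcol_lt; lia.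
Qed.

Lemma pcol_mem j : 1 <= j <= n -> a <= p j <= n.
Proof. by move=> hj; apply: (gN_mem a_le0 n_gt0 bnd_seq _ (gN_pcol hj)); lia. Qed.

Lemma pcol1_le1 : p 1 <= 1.
Proof. by apply: (gN1_le1 a_le0 n_gt0 bnd_seq); apply: gN_pcol; lia. Qed.

Let W_inj : injective W. Proof. by case: HW => [[/bij_inj]]. Qed.
Let W_supp : supported_in W a n. Proof. by case: HW => [[]]. Qed.

Lemma W_le i t : 1 <= i <= n -> t <= n ->
  (forall j, i < j -> j <= n -> t < p j) -> W t <= i.
Proof.
move=> hi htn hp; case ht: (inZ a n t); last first.
  by rewrite (W_supp (negbT ht)); move: ht; rewrite /inZ; lia.
have := supported_in_mem W_inj W_supp ht; rewrite /inZ => hw.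
case: (leP (W t) i) => // hgt.
have : W (p (W t)) = W t by case: HW => _ + _ _; apply; rewrite /inZ; lia.
move/W_inj => et; have := hp (W t) hgt; rewrite et ltxx; lia.
Qed.

(* The entries of W up to position p_1 are <= 1, so deleting the values
   2, ..., n from the one-line notation does not shift position p_1. *)
Lemma iota_del_pcol1 : iota_del a n 1 W (p 1) = W (p 1).
Proof.
have hp1 := pcol1_le1; have hp1n : a <= p 1 <= n by apply: pcol_mem; lia.
have Wle1 t : t <= p 1 -> W t <= 1.
  move=> ht; apply: W_le => [||j hj hjn]; try lia.
  by apply: le_lt_trans ht (pcol_lt _ hj hjn).
rewrite /iota_del /inZ ifT; last by lia.
rewrite (@irange_split a (p 1 + 1) n) ?addrK; last by lia.
rewrite map_cat filter_cat.
have -> : [seq x <- [seq W i | i <- irange a (p 1)] | x <= 1] = [seq W i | i <- irange a (p 1)].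
  by apply/all_filterP/allP => x /mapP [t]; rewrite mem_irange => ht ->; apply: Wle1; lia.
have hsz : (absz (p 1 - a) < size (irange a (p 1)))%N by rewrite size_irange; lia.
by rewrite nth_cat size_map hsz (nth_map 0) // nth_irange // -[X in W X = _]addr0; congr W; lia.
Qed.

Lemma W_pcol j : 1 <= j <= n -> W (p j) = j.
Proof.
move=> hj; case: (eqVneq j 1) => [->|/eqP j1]; last first.
  by case: HW => _ + _ _; apply; rewrite /inZ; lia.
have p1n : a <= p 1 <= n by apply: pcol_mem; lia.
have hp1 := pcol1_le1.
have gNW : gN (W (p 1)) = Some (p 1).
  by case: HW => _ _ + _; rewrite -iota_del_pcol1; apply; rewrite /inZ; lia.
have hW : a <= W (p 1) <= n.
  by apply: (supported_in_mem W_inj W_supp); rewrite /inZ; lia.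
by apply: (gN_inj a_le0 n_gt0 bnd_seq hW _ gNW (gN_pcol _)); lia.
Qed.

Lemma uu_step i : 1 <= i < n ->
  karrow (alpha gN i) (uu i) (uu (i + 1)) /\ ~~ fixb (alpha gN i) n (uu i) (uu (i + 1)) i.
Proof. by case: HC => _ _ h hi; apply: h; rewrite /inZ; lia. Qed.

Lemma uu_bij i : 1 <= i <= n -> bijective (uu i).
Proof.
move=> /andP[]; move: i; apply: ge_int_ind => [_|i hi IH hin].
  by case: HC HU => -> _ _ [[]].
have /uu_step[arr _] : 1 <= i < n by lia.
by case: (karrow_kmove (IH _) arr) => //; lia.
Qed.

Lemma uu_kmove i : 1 <= i < n -> kmove (alpha gN i) (uu i) (uu (i + 1)).
Proof.
move=> hi; have /uu_step[arr _] := hi.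
by case: (karrow_kmove (uu_bij _) arr) => //; lia.
Qed.

Lemma uu_le_W i t : 1 <= i <= n ->
  (forall j, i < j -> j <= n -> t < p j) -> uu i t <= W t.
Proof.
move=> hi hp; case: HC => _ <- _.
apply: (homo_ler_int_steps (g := uu^~ t)) => [|m hm hmn]; first by lia.
have /uu_kmove[+ _ _] : 1 <= m < n by lia.
by apply; rewrite /alpha lerBrDr lezD1; apply: hp; lia.
Qed.

Lemma W_le_uu i t : 1 <= i <= n -> n < t -> W t <= uu i t.
Proof.
move=> hi ht; case: HC => _ <- _; rewrite -lerN2.
apply: (homo_ler_int_steps (g := fun m => - uu m t)) => [|m hm hmn]; first by lia.
have /uu_kmove[_ + _] : 1 <= m < n by lia.
by rewrite lerN2; apply; rewrite /alpha; have := pcol_mem (j := m + 1); lia.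
Qed.

Lemma alpha_lt_pcol i j t : 1 <= i -> i < j -> j <= n -> t <= alpha gN i -> t < p j.
Proof.
move=> hi hj hjn ht; apply: (le_lt_trans ht); rewrite /alpha ltrBlDr ltzD1.
by apply: pcol_le; lia.
Qed.

Lemma W_le_alpha i t : 1 <= i < n -> t <= alpha gN i -> W t <= i.
Proof.
move=> hi ht; have later j : i < j -> j <= n -> t < p j.
  by move=> hj hjn; apply: alpha_lt_pcol ht; lia.
have /andP[_ pn] : a <= p (i + 1) <= n by apply: pcol_mem; lia.
have tn : t <= n by apply/ltW/(lt_le_trans _ pn); apply: later; lia.
by apply: W_le later; lia.
Qed.

Lemma uu_succ_le_W i t : 1 <= i < n -> t <= alpha gN i -> uu (i + 1) t <= W t.
Proof.
move=> hi ht; apply: uu_le_W; first by lia.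
by move=> j hj hjn; apply: alpha_lt_pcol ht; lia.
Qed.

Lemma uu_succ_le i t : 1 <= i < n -> t <= alpha gN i -> uu (i + 1) t <= i.
Proof. by move=> hi ht; apply: le_trans (uu_succ_le_W hi ht) (W_le_alpha hi ht). Qed.

Lemma uu_succ_pcol i : 1 <= i < n -> uu (i + 1) (p i) = i.
Proof.
move=> hi; have /uu_bij[g uuK guu] : 1 <= i + 1 <= n by lia.
set s := g i; have es : uu (i + 1) s = i by rewrite guu.
have [sk|ks] := leP s (alpha gN i).
  have : W s = W (p i).
    rewrite W_pcol; last by lia.
    by apply/eqP; rewrite eq_le W_le_alpha // -{1}es uu_succ_le_W.
  by move/W_inj => <-.
exfalso; have [sn|ns] := leP s n; last first.
  have := W_le_uu (i := i + 1) _ ns; rewrite es W_supp /inZ; lia.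
have [fixed|moved] := eqVneq (uu (i + 1) s) (uu i s).
  have [_ /negP] := uu_step hi; apply; apply/hasP; exists s; first by rewrite mem_irange; lia.
  by rewrite -fixed es !eqxx.
have /uu_kmove[_ _ /(_ s ks moved)[y hy]] := hi.
by rewrite es; have := uu_succ_le hi hy; lia.
Qed.

Lemma uu_pcol i j : 1 <= j -> j < i -> i <= n -> uu i (p j) = j.
Proof.
move=> hj hji hin; have hi : 1 <= i by lia.
move: i hi hji hin; apply: ge_int_ind => [|i hi IH hji hin]; first by lia.
have hi' : 1 <= i < n by lia.
have [->|/eqP ij] := eqVneq j i; first exact: uu_succ_pcol.
have pj : p j <= alpha gN i.
  by rewrite /alpha lerBrDr lezD1; apply: pcol_lt; lia.
have /uu_kmove[/(_ _ pj) + _ _] := hi'; rewrite IH; try lia.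
move=> lb; apply/eqP; rewrite eq_le lb andbT.
by rewrite -{2}(W_pcol (j := j)); [apply: uu_succ_le_W | lia].
Qed.

Lemma fixb_uu_le0 i j : 1 <= i < n ->
  fixb (alpha gN i) n (uu i) (uu (i + 1)) j -> a <= j <= i -> j <= 0.
Proof.
move=> hi hfix hj; rewrite leNgt; apply/negP => j_gt0.
have [eji|/eqP ji] := eqVneq j i; first by subst j; have [_] := uu_step hi; rewrite hfix.
move: hfix => /hasP[t]; rewrite mem_irange => ht /andP[/eqP _ /eqP ej].
have : uu i t = uu i (p j) by rewrite ej uu_pcol //; lia.
have /uu_bij/bij_inj uu_inj : 1 <= i <= n by lia.
move=> /uu_inj et; have : p j < p (i + 1) by apply: pcol_lt; lia.
move: ht; rewrite /alpha subrK et => /andP[le _] lt.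
by have := lt_le_trans lt le; rewrite ltxx.
Qed.

End Chain.

Definition fix_pairs (a n : int) (gN : int -> option int) (uu : int -> int -> int) :
    seq (int * int) :=
  [seq (i, j) | i <- irange 1 (n - 1),
                j <- [seq j <- irange a i | fixb (alpha gN i) n (uu i) (uu (i + 1)) j]].

Lemma uniq_fix_pairs a n gN uu : uniq (fix_pairs a n gN uu).
Proof.
apply: allpairs_uniq_dep => [||[i j] [i' j'] _ _ [-> ->]] //; first exact: uniq_irange.
by move=> i _; rewrite filter_uniq // uniq_irange.
Qed.

Lemma mem_fix_pairs a n gN uu i j : (i, j) \in fix_pairs a n gN uu ->
  [/\ inZ 1 (n - 1) i, inZ a i j & fixb (alpha gN i) n (uu i) (uu (i + 1)) j].
Proof.
case/allpairsPdep => i' [j' [hi hj [-> ->]]].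
by move: hi hj; rewrite mem_filter !mem_irange => hi /andP[].
Qed.

Lemma wt_fix_pairs (R : comNzRingType) a n gN uu (x y : int -> R) :
  wt a n gN uu x y = \prod_(ij <- fix_pairs a n gN uu) (x ij.1 - y ij.2).
Proof. by rewrite /wt big_allpairs_dep; apply: eq_bigr => i _; rewrite big_filter. Qed.

Theorem lemma4p16 (a n : int) (gN gE gS gW : int -> option int)
    (U W : int -> int) (uu : int -> int -> int) :
  a <= 0 -> 0 < n ->
  boundary_ok a n gN gE gS gW ->
  U_ok a n gS U -> W_ok a n gN W ->
  Ctilde a n gN U W uu ->
  [/\ (forall i j : int, 1 <= j -> j < i -> i <= n -> uu i (pcol gN j) = j),
      (forall i j : int, inZ 1 (n - 1) i ->
         fixb (alpha gN i) n (uu i) (uu (i + 1)) j -> inZ a i j -> j <= 0) &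
      exists L : seq (int * int),
        [/\ uniq L,
            all (fun ij => inZ 1 (n - 1) ij.1 && inZ a 0 ij.2) L &
            forall (R : comNzRingType) (y : int -> R),
              wt a n gN uu y y = \prod_(ij <- L) (y ij.1 - y ij.2)]].
Proof.
move=> a_le0 n_gt0 bnd HU HW HC.
have fix_le0 i j : inZ 1 (n - 1) i ->
    fixb (alpha gN i) n (uu i) (uu (i + 1)) j -> inZ a i j -> j <= 0.
  by rewrite /inZ => hi hfix hj; apply: (fixb_uu_le0 a_le0 n_gt0 bnd HU HW HC _ hfix); lia.
split=> //; first exact: (uu_pcol a_le0 n_gt0 bnd HU HW HC).
exists (fix_pairs a n gN uu); split=> [||R y]; rewrite ?uniq_fix_pairs ?wt_fix_pairs //.
apply/allP => -[i j] /mem_fix_pairs[hi hj hfix] /=; rewrite hi /=.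
by have := fix_le0 _ _ hi hfix hj; move: hj; rewrite /inZ; lia.
Qed.
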